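(* Let $A$, $\bar A$, $H$ be as in the context. Then $\frac m4\le\kappa([\bar A;A])=\kappa(H)=\frac{\sin\left(\frac{(3m_1m_2-1)\pi}{6m_1m_2}\right)}{\sin\left(\frac{\pi}{6m_1m_2}\right)}<m$.
   Context: Let $L_f>0$, integers $m_1\ge2$, $m_2\ge1$ with $m_1m_2$ even, $m=3m_1m_2$, $\bar d\ge5$ odd. $J_p\in\mathbb R^{(p-1)\times p}$ has $-1$ at $(k,k)$, $1$ at $(k,k+1)$, zero elsewhere. $H=mL_f(J_m\otimes I_{\bar d})$. $\mathcal M=\{im_1:i=1,\dots,3m_2-1\}$, $\mathcal M^C=\{1,\dots,m-1\}\setminus\mathcal M$; $\bar A=mL_f(J_{\mathcal M}\otimes I_{\bar d})$, $A=mL_f(J_{\mathcal M^C}\otimes I_{\bar d})$ where $J_{\mathcal M},J_{\mathcal M^C}$ are the rows of $J_m$ indexed by $\mathcal M,\mathcal M^C$. $[\bar A;A]$ is $\bar A$ stacked above $A$. For a matrix $M$, $\kappa(M)=\sqrt{\lambda_{\max}(MM^\top)/\lambda^+_{\min}(MM^\top)}$, where $\lambda^+_{\min}$ is the smallest positive eigenvalue. *)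

From HB Require Import structures.
From mathcomp Require Import all_boot all_order all_algebra.
From mathcomp Require Import mxtens.
From mathcomp Require Import boolp classical_sets reals trigo.
Set Implicit Arguments. Unset Strict Implicit. Unset Printing Implicit Defensive.
Import Order.TTheory GRing.Theory Num.Theory.
Local Open Scope ring_scope.

Definition Jmx (R : pzRingType) (p : nat) : 'M[R]_(p.-1, p) :=
  \matrix_(k < p.-1, j < p)
    ((- 1) *+ (j == k :> nat) + 1 *+ (j == k.+1 :> nat)).

Definition rows_of (R : Type) (p q : nat) (S : {set 'I_p}) (M : 'M[R]_(p, q))
  : 'M[R]_(#|S|, q) := rowsub (@enum_val _ (mem S)) M.

Section Defs.
Variable R : realType.
Variables (Lf : R) (m1 m2 d : nat).

Definition mm : nat := 3 * m1 * m2.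

(* the index set M = { i*m1 : i = 1..3m2-1 } of (1-indexed) rows of J_m;
   row with 0-based index k is row k.+1 in 1-based numbering *)
Definition Mset : {set 'I_(mm.-1)} :=
  [set k : 'I_(mm.-1) | [exists i : 'I_(3 * m2), (0 < i)%N && (k.+1 == i * m1)%N]].

Definition Hmx : 'M[R]_(mm.-1 * d, mm * d) :=
  (mm%:R * Lf) *: (Jmx R mm *t (1%:M : 'M[R]_d)).

Definition Abarmx : 'M[R]_(#|Mset| * d, mm * d) :=
  (mm%:R * Lf) *: (rows_of Mset (Jmx R mm) *t (1%:M : 'M[R]_d)).

Definition Amx : 'M[R]_(#|~: Mset| * d, mm * d) :=
  (mm%:R * Lf) *: (rows_of (~: Mset) (Jmx R mm) *t (1%:M : 'M[R]_d)).

End Defs.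

Local Open Scope classical_set_scope.
Definition lambda_max (R : realType) (n : nat) (S : 'M[R]_n) : R :=
  sup [set a : R | eigenvalue S a].
Definition lambda_min_pos (R : realType) (n : nat) (S : 'M[R]_n) : R :=
  inf [set a : R | eigenvalue S a /\ 0 < a].
Definition kappa (R : realType) (p q : nat) (M : 'M[R]_(p, q)) : R :=
  Num.sqrt (lambda_max (M *m M^T) / lambda_min_pos (M *m M^T)).

From HB Require Import structures.
From mathcomp Require Import all_boot all_order all_algebra.
From mathcomp Require Import mxtens.
From mathcomp Require Import boolp classical_sets reals trigo.
From mathcomp Require Import ring lra zify.
Import Order.TTheory GRing.Theory Num.Theory.
Local Open Scope ring_scope.
Set Implicit Arguments. Unset Strict Implicit. Unset Printing Implicit Defensive.

(* The rows of [Abar; A] are those of H in another order, so the two Gram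
   matrices M M^T are conjugate by a permutation and kappa([Abar; A]) = kappa(H).
   With p = 3 m1 m2 and c = m Lf, H H^T = c^2 (J_p J_p^T (x) I), and J_p J_p^T is
   the second-difference matrix, with the p - 1 distinct eigenvalues
   4 sin^2 (k pi / 2p), 0 < k < p (eigenvectors (sin (j k pi / p))_j); as there
   are p - 1 of them, this is the whole spectrum, and
   kappa(H) = sin ((p - 1) pi / 2p) / sin (pi / 2p) = cot (pi / 2p).
   Subadditivity of |sin| gives p sin (pi / 2p) >= sin (pi / 2) = 1, hence
   cot (pi / 2p) < p; for even p, superadditivity of tan on [0, pi / 4] gives
   (p / 2) tan (pi / 2p) <= tan (pi / 4) = 1, hence cot (pi / 2p) >= p / 2. *)

Lemma sum_ord_mulrn_eq {V : nmodType} (n i : nat) (F : nat -> V) :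
  \sum_(j < n) F j *+ (j == i :> nat) = F i *+ (i < n)%N.
Proof.
by rewrite (eq_bigr (fun j : 'I_n => if j == i :> nat then F j else 0))
  => [|j _]; rewrite ?mulrb // -big_mkcond big_ord1_eq.
Qed.

Section DifferenceMatrix.
Variable R : pzRingType.

Lemma row_mulJ (p : nat) (f : nat -> R) : f 0%N = 0 -> f p = 0 ->
  (\row_(i < p.-1) f i.+1) *m Jmx R p = \row_(l < p) (f l - f l.+1).
Proof.
move=> f0 fp; apply/rowP => l; rewrite !mxE.
under eq_bigr => i _ do rewrite !mxE mulrDr !mulrnAr mulrN1 mulr1 mulNrn
  [(l == i :> nat)]eq_sym [(l == i.+1 :> nat)]eq_sym.
rewrite big_split /= sumrN (sum_ord_mulrn_eq _ _ (fun j => f j.+1)) addrC; congr (_ - _).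
  case: l => [[|l] lp] /=; first by rewrite f0 big1 // => i _; rewrite mulr0n.
  rewrite (eq_bigr (fun i : 'I_p.-1 => f i.+1 *+ (i == l :> nat))) //.
  have lp' : (l < p.-1)%N by lia.
  by rewrite (sum_ord_mulrn_eq _ _ (fun j => f j.+1)) lp'.
case: ltnP => // lp; have -> : l.+1 = p by have := ltn_ord l; lia.
by rewrite fp mulr0n.
Qed.

Lemma row_mulJtr (p : nat) (g : nat -> R) :
  (\row_(l < p) g l) *m (Jmx R p)^T = \row_(i < p.-1) (g i.+1 - g i).
Proof.
apply/rowP => i; rewrite !mxE.
under eq_bigr => l _ do rewrite !mxE mulrDr !mulrnAr mulrN1 mulr1 mulNrn.
rewrite big_split /= sumrN !sum_ord_mulrn_eq addrC.
have ip : (i.+1 < p)%N by have := ltn_ord i; lia.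
by rewrite ip (ltnW ip).
Qed.

Lemma row_mulJJtr (p : nat) (f : nat -> R) : f 0%N = 0 -> f p = 0 ->
  (\row_(i < p.-1) f i.+1) *m (Jmx R p *m (Jmx R p)^T) =
  \row_(i < p.-1) (f i.+1 *+ 2 - f i - f i.+2).
Proof.
move=> f0 fp; rewrite mulmxA row_mulJ // (row_mulJtr _ (fun l => f l - f l.+1)).
apply/rowP => i; rewrite !mxE mulr2n opprB addrACA -[RHS]addrA.
by rewrite [- f i.+2 - _]addrC.
Qed.

End DifferenceMatrix.

Section Eigenvalues.
Variable F : fieldType.

Lemma eigenvalue_unitmx n (A : 'M[F]_n) a : eigenvalue A a = (A - a%:M \notin unitmx).
Proof. by rewrite /eigenvalue /eigenspace kermx_eq0 row_free_unit. Qed.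

Lemma eigenvalueZ n (A : 'M[F]_n) c a :
  c != 0 -> eigenvalue (c *: A) (c * a) = eigenvalue A a.
Proof.
by move=> c0; rewrite !eigenvalue_unitmx -scale_scalar_mx -scalerBr unitmxZ ?unitfE.
Qed.

Lemma tensmx1B p d (M : 'M[F]_p) a :
  (M - a%:M) *t (1%:M : 'M_d) = M *t 1%:M - a%:M.
Proof.
apply/matrixP => ij kl.
case: (mxtens_indexP ij) => i j; case: (mxtens_indexP kl) => k l.
rewrite !mxE !mxtens_indexK (inj_eq (can_inj (@mxtens_indexK _ _))) xpair_eqE /=.
by case: (i == k); case: (j == l); rewrite /= ?mulr1n ?mulr0n ?mulr1 ?mulr0 ?subr0.
Qed.

Lemma eigenvalue_tensmx1 p d (M : 'M[F]_p) a : (0 < p)%N -> (0 < d)%N ->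
  eigenvalue (M *t (1%:M : 'M_d)) a = eigenvalue M a.
Proof.
move=> p0 d0; apply/idP/idP.
  rewrite !eigenvalue_unitmx -tensmx1B; apply: contra => /tensmx_unit.
  by apply; rewrite ?unitmx1 -?lt0n.
case/eigenvalueP => u uM u0; apply/eigenvalueP.
exists (u *t (const_mx 1 : 'rV_d)).
  apply: etrans (tensmx_mul u (const_mx 1 : 'rV_d) M 1%:M) _.
  by rewrite uM mulmx1; apply/matrixP => i j; rewrite !mxE mulrA.
apply: contraNneq u0 => /matrixP u0; apply/eqP/rowP => i.
have := u0 0 (mxtens_index (i, Ordinal d0)).
by rewrite !mxE mxtens_indexK /= mulr1 [Ordinal _]ord1.
Qed.

Lemma mxsub_eigenvalue q p (s : 'I_q -> 'I_p) (B : 'M[F]_p) a :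
  bijective s -> eigenvalue B a -> eigenvalue (mxsub s s B) a.
Proof.
case=> t st ts /eigenvalueP [v vB v0]; apply/eigenvalueP; exists (colsub s v).
  apply/rowP => j; have := congr1 (fun w : 'rV_p => w 0 (s j)) vB.
  rewrite !mxE => <-.
  rewrite [RHS](reindex s) /=; last by exists t => i _.
  by apply: eq_bigr => i _; rewrite !mxE.
apply: contraNneq v0 => /rowP v0; apply/eqP/rowP => k.
by have := v0 (t k); rewrite !mxE ts.
Qed.

Lemma eigenvalue_mxsub q p (s : 'I_q -> 'I_p) (B : 'M[F]_p) :
  bijective s -> eigenvalue (mxsub s s B) =1 eigenvalue B.
Proof.
move=> sbij a; apply/idP/idP; last exact: mxsub_eigenvalue.
have [t st ts] := sbij; have tbij : bijective t by exists s.
move/(mxsub_eigenvalue tbij).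
suff -> : mxsub t t (mxsub s s B) = B by [].
by apply/matrixP => i j; rewrite !mxE !ts.
Qed.

Lemma eigenvalue_mem n (A : 'M[F]_n) (s : seq F) a : uniq s -> size s = n ->
  all (eigenvalue A) s -> eigenvalue A a -> a \in s.
Proof.
move=> s_uniq s_size sA Aa; apply: contraT => as_.
have := max_poly_roots (monic_neq0 (char_poly_monic A)) (rs := a :: s).
rewrite size_char_poly /= s_size ltnn; apply.
  rewrite /= -eigenvalue_root_char Aa; apply/allP => b bs.
  by rewrite -eigenvalue_root_char (allP sA).
by rewrite /= as_.
Qed.

End Eigenvalues.

Section RowReindexing.

Definition cat_idx m1 m2 n (f : 'I_m1 -> 'I_n) (g : 'I_m2 -> 'I_n)
    (i : 'I_(m1 + m2)) : 'I_n :=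
  match split i with inl k => f k | inr k => g k end.

Lemma col_mx_rowsub (R : Type) m1 m2 n q (f : 'I_m1 -> 'I_n) (g : 'I_m2 -> 'I_n)
    (A : 'M[R]_(n, q)) :
  col_mx (rowsub f A) (rowsub g A) = rowsub (cat_idx f g) A.
Proof.
by apply/matrixP => i j; rewrite !mxE /cat_idx; case: (split i) => k; rewrite !mxE.
Qed.

Lemma cat_idx_inj m1 m2 n (f : 'I_m1 -> 'I_n) (g : 'I_m2 -> 'I_n) :
  injective f -> injective g -> (forall i j, f i != g j) -> injective (cat_idx f g).
Proof.
move=> f_inj g_inj fg i1 i2; rewrite /cat_idx.
case: splitP => k1 e1; case: splitP => k2 e2 e; apply: val_inj; rewrite /= e1 e2.
- by rewrite (f_inj _ _ e).
- by move: (fg k1 k2); rewrite e eqxx.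
- by move: (fg k2 k1); rewrite e eqxx.
- by rewrite (g_inj _ _ e).
Qed.

Definition tens_idx m n d (f : 'I_m -> 'I_n) (k : 'I_(m * d)) : 'I_(n * d) :=
  mxtens_index (f (mxtens_unindex k).1, (mxtens_unindex k).2).

Lemma tens_idx_inj m n d (f : 'I_m -> 'I_n) : injective f -> injective (@tens_idx m n d f).
Proof.
move=> f_inj k1 k2; case: (mxtens_indexP k1) => a1 b1; case: (mxtens_indexP k2) => a2 b2.
by rewrite /tens_idx !mxtens_indexK => /(can_inj (@mxtens_indexK _ _)) [/f_inj -> ->].
Qed.

Lemma rowsub_tensmx (R : pzRingType) m n q d r (f : 'I_m -> 'I_n)
    (A : 'M[R]_(n, q)) (B : 'M[R]_(d, r)) :
  rowsub f A *t B = rowsub (tens_idx f) (A *t B).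
Proof. by apply/matrixP => i j; rewrite !mxE mxtens_indexK. Qed.

Definition rows_ofC_idx n d (S : {set 'I_n}) : 'I_(#|S| * d + #|~: S| * d) -> 'I_(n * d) :=
  cat_idx (tens_idx (@enum_val _ (mem S))) (tens_idx (@enum_val _ (mem (~: S)))).

Lemma rows_ofC_idx_bij n d (S : {set 'I_n}) : bijective (@rows_ofC_idx n d S).
Proof.
apply: inj_card_bij; last by rewrite !card_ord -mulnDl cardsC card_ord.
apply: cat_idx_inj; try exact/tens_idx_inj/enum_val_inj.
move=> i j; apply: contraTneq (enum_valP (mxtens_unindex j).1) => e.
have := congr1 (fun k => (mxtens_unindex k).1) e; rewrite /tens_idx !mxtens_indexK /= => <-.
by rewrite inE negbK enum_valP.
Qed.

Lemma col_mx_rows_ofC (R : pzRingType) n q d r (S : {set 'I_n}) (J : 'M[R]_(n, q))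
    (B : 'M[R]_(d, r)) (c : R) :
  col_mx (c *: (rows_of S J *t B)) (c *: (rows_of (~: S) J *t B)) =
  rowsub (@rows_ofC_idx n d S) (c *: (J *t B)).
Proof. by rewrite /rows_of !rowsub_tensmx !linearZ /= -scale_col_mx col_mx_rowsub. Qed.

End RowReindexing.

Section ConditionNumber.
Variable R : realType.
Local Open Scope classical_set_scope.

Lemma lambda_maxE n (S : 'M[R]_n) x :
  eigenvalue S x -> (forall y, eigenvalue S y -> y <= x) -> lambda_max S = x.
Proof.
move=> Sx ub; apply/eqP; rewrite eq_le; apply/andP; split.
  by apply: ge_sup; [exists x | move=> y /ub].
by apply: ub_le_sup => //; exists x => y /ub.
Qed.

Lemma lambda_min_posE n (S : 'M[R]_n) x : eigenvalue S x -> 0 < x ->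
  (forall y, eigenvalue S y -> 0 < y -> x <= y) -> lambda_min_pos S = x.
Proof.
move=> Sx x0 lb; apply/eqP; rewrite eq_le; apply/andP; split.
  by apply: ge_inf; [exists x => y [/lb]|].
by apply: lb_le_inf; [exists x | move=> y [/lb]].
Qed.

Lemma kappa_eigenvalue_eq p q p' q' (M : 'M[R]_(p, q)) (N : 'M[R]_(p', q')) :
  eigenvalue (M *m M^T) =1 eigenvalue (N *m N^T) -> kappa M = kappa N.
Proof. by move=> MN; rewrite /kappa /lambda_max /lambda_min_pos (funext MN). Qed.

Lemma kappa_rowsub q p r (s : 'I_q -> 'I_p) (M : 'M[R]_(p, r)) :
  bijective s -> kappa (rowsub s M) = kappa M.
Proof.
move=> s_bij; apply: kappa_eigenvalue_eq => a.
rewrite -(eigenvalue_mxsub _ s_bij) mxsub_mul.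
by congr (eigenvalue (_ *m _) a); apply/matrixP => i j; rewrite !mxE.
Qed.

End ConditionNumber.

Section Trigonometry.
Variable R : realType.

Lemma mulr_natSl (x : R) n : n.+1%:R * x = n%:R * x + x.
Proof. by rewrite -natr1 mulrDl mul1r. Qed.

Lemma sin_natmulpi k : sin (k%:R * pi) = 0 :> R.
Proof. by rewrite mulr_natl -[_ *+ k]add0r (alternatingn (@sinDpi R)) sin0 mulr0. Qed.

Lemma half_angle_bounds p j : (0 < p)%N -> (j <= p)%N ->
  0 <= j%:R * (pi : R) / (2 * p)%:R <= pi / 2.
Proof.
move=> p0 jp; rewrite divr_ge0 ?mulr_ge0 ?pi_ge0 //=.
rewrite ler_pdivrMr ?ltr0n ?muln_gt0 // (_ : _ * _%:R = p%:R * pi).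
  by rewrite ler_wpM2r ?pi_ge0 ?ler_nat.
by rewrite natrM; field.
Qed.

Lemma norm_sin_natmul_le (x : R) n : `|sin (n%:R * x)| <= n%:R * `|sin x|.
Proof.
elim: n => [|n IH]; first by rewrite !mul0r sin0 normr0.
rewrite !mulr_natSl sinD (le_trans (ler_normD _ _)) // !normrM lerD //.
  by rewrite (le_trans _ IH) // ler_piMr ?cos_max.
by rewrite ler_piMl ?cos_max.
Qed.

(* [n tan x <= tan (n x)], cleared of denominators. *)
Lemma sin_cos_natmul_le (x : R) n : 0 <= x <= pi / 2 -> n%:R * x <= pi ->
  n%:R * sin x * cos (n%:R * x) <= sin (n%:R * x) * cos x.
Proof.
case/andP => x0 xpi; elim: n => [|n IH] xn; first by rewrite !mul0r sin0 mul0r.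
have xn' : n%:R * x <= pi by apply: le_trans xn; rewrite mulr_natSl lerDl.
have := IH xn'; rewrite -subr_ge0 => IHn; rewrite !mulr_natSl sinD cosD.
have pi0 := @pi_gt0 R.
have sx : 0 <= sin x by apply: sin_ge0_pi; rewrite x0 /=; lra.
have cx : 0 <= cos x by apply: cos_ge0_pihalf; rewrite xpi andbT; lra.
have sy : 0 <= sin (n%:R * x) by apply: sin_ge0_pi; rewrite xn' mulr_ge0.
have := mulr_ge0 cx IHn.
have := mulr_ge0 (mulr_ge0 (addr_ge0 (mulr_ge0 (ler0n _ n) sx) sx) sx) sy.
nra.
Qed.

Lemma sin_pred_pi_div p : (0 < p)%N ->
  sin ((p.-1)%:R * pi / (2 * p)%:R) = cos (pi / (2 * p)%:R) :> R.
Proof.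
move=> p0; rewrite (_ : _ / _ = pi / 2 - pi / (2 * p)%:R).
  by rewrite sinB sin_pihalf cos_pihalf mul1r mul0r subr0.
by rewrite -subn1 natrB // natrM; field; rewrite pnatr_eq0 -lt0n.
Qed.

Lemma cot_pi_div_lt p : (0 < p)%N ->
  cos (pi / (2 * p)%:R) / sin (pi / (2 * p)%:R) < p%:R :> R.
Proof.
move=> p0; have pi0 := @pi_gt0 R.
have /andP[_] := half_angle_bounds p0 p0; rewrite mul1r => x_le.
have x_gt0 : 0 < pi / (2 * p)%:R :> R by rewrite divr_gt0 ?ltr0n ?muln_gt0.
have sx : 0 < sin (pi / (2 * p)%:R) :> R by apply: sin_gt0_pi; rewrite x_gt0 /=; lra.
have psx : 1 <= p%:R * sin (pi / (2 * p)%:R) :> R.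
  have := norm_sin_natmul_le (pi / (2 * p)%:R) p.
  rewrite (_ : _ * _ = pi / 2) ?sin_pihalf ?normr1 ?gtr0_norm //.
  by rewrite natrM; field; rewrite pnatr_eq0 -lt0n.
have cx : cos (pi / (2 * p)%:R) < 1 :> R.
  by rewrite -[ltRHS]cos0 ltr_cos ?in_itv /= ?lexx ?ltW //; lra.
by rewrite ltr_pdivrMr //; lra.
Qed.

Lemma cot_pi_div_ge p : (0 < p)%N -> ~~ odd p ->
  p%:R / 2 <= cos (pi / (2 * p)%:R) / sin (pi / (2 * p)%:R) :> R.
Proof.
move=> p0 p_even; have pi0 := @pi_gt0 R.
have [q pE] : exists q, p = (q * 2)%N.
  by exists p./2; rewrite -[LHS]odd_double_half (negbTE p_even) muln2.
have /andP[x_ge0 x_le] := half_angle_bounds p0 p0; rewrite mul1r in x_ge0 x_le.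
have x_gt0 : 0 < pi / (2 * p)%:R :> R by rewrite divr_gt0 ?ltr0n ?muln_gt0.
have sx : 0 < sin (pi / (2 * p)%:R) :> R by apply: sin_gt0_pi; rewrite x_gt0 /=; lra.
have qx : q%:R * (pi / (2 * p)%:R) = pi / 4 :> R.
  by rewrite pE !natrM; field; rewrite pnatr_eq0 -lt0n; lia.
have c4 : 0 < cos (pi / 4) :> R by apply: cos_gt0_pihalf; lra.
have s4 : sin (pi / 4) = cos (pi / 4) :> R.
  by rewrite -[LHS](divfK (lt0r_neq0 c4)) -[sin _ / _]/(tan _) tan_piquarter mul1r.
have := sin_cos_natmul_le (x := pi / (2 * p)%:R) (n := q).
have pi4 : pi / 4 <= pi :> R by lra.
rewrite qx s4 x_ge0 x_le => /(_ isT pi4).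
rewrite [cos (pi / 4) * _]mulrC ler_pM2r // => qsx.
by rewrite pE natrM mulfK ?pnatr_eq0 // ler_pdivlMr // -pE.
Qed.

End Trigonometry.

Section DifferenceSpectrum.
Variable R : realType.

Definition JJt_eig (p k : nat) : R := 4 * sin (k%:R * pi / (2 * p)%:R) ^+ 2.

Lemma JJt_eig_lt p k l : (k < l)%N -> (l <= p)%N -> JJt_eig p k < JJt_eig p l.
Proof.
move=> kl lp; have p0 : (0 < p)%N by lia.
have /andP[k0 kpi] := half_angle_bounds R p0 (ltnW (leq_trans kl lp)).
have /andP[l0 lpi] := half_angle_bounds R p0 lp.
have pi0 := @pi_gt0 R.
rewrite /JJt_eig ltr_pM2l // ltrXn2r //.
  by apply: sin_ge0_pi; rewrite k0 /=; lra.
rewrite ltr_sin ?in_itv /=; last 2 first.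
- by rewrite kpi andbT; lra.
- by rewrite lpi andbT; lra.
by rewrite ltr_pM2r ?invr_gt0 ?ltr0n ?muln_gt0 // ltr_pM2r // ltr_nat.
Qed.

Lemma JJt_eig_le p k l : (k <= l)%N -> (l <= p)%N -> JJt_eig p k <= JJt_eig p l.
Proof. by rewrite leq_eqVlt => /predU1P[-> //|kl lp]; apply/ltW/JJt_eig_lt. Qed.

Lemma JJt_eig_gt0 p k : (0 < k)%N -> (k <= p)%N -> 0 < JJt_eig p k.
Proof.
move=> k0 kp; apply: le_lt_trans (JJt_eig_lt k0 kp).
by rewrite /JJt_eig !mul0r sin0 expr0n mulr0.
Qed.

Lemma sqrt_JJt_eig_ratio p : (1 < p)%N ->
  Num.sqrt (JJt_eig p p.-1 / JJt_eig p 1) =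
  sin ((p.-1)%:R * pi / (2 * p)%:R) / sin (pi / (2 * p)%:R).
Proof.
move=> p1; have p0 : (0 < p)%N by lia.
have pi0 := @pi_gt0 R.
have /andP[_ th1_le] := half_angle_bounds R p0 (ltnW p1); rewrite mul1r in th1_le.
have /andP[thp_ge0 thp_le] := half_angle_bounds R p0 (leq_pred p).
have th1_gt0 : 0 < pi / (2 * p)%:R :> R by rewrite divr_gt0 ?ltr0n ?muln_gt0.
have s1_gt0 : 0 < sin (pi / (2 * p)%:R) :> R.
  by apply: sin_gt0_pi; rewrite th1_gt0 /=; lra.
have sp_ge0 : 0 <= sin ((p.-1)%:R * pi / (2 * p)%:R) :> R.
  by apply: sin_ge0_pi; rewrite thp_ge0 /=; lra.
rewrite /JJt_eig mul1r invfM mulrACA divff ?mul1r ?pnatr_eq0 // -expr_div_n.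
by rewrite sqrtr_sqr ger0_norm // divr_ge0 // ltW.
Qed.

(* The eigenvector is (sin (j phi))_j with phi = k pi / p: it satisfies the
   second-difference recurrence and vanishes at j = 0 and j = p. *)
Lemma eigenvalue_JJt p k : (0 < k < p)%N ->
  eigenvalue (Jmx R p *m (Jmx R p)^T) (JJt_eig p k).
Proof.
case/andP => k0 kp; have p0 : (0 < p)%N by lia.
have phip : p%:R * (k%:R * pi / (2 * p)%:R *+ 2) = k%:R * pi :> R.
  by rewrite natrM mulr2n; field; rewrite pnatr_eq0 -lt0n.
have phi_gt0 : 0 < k%:R * pi / (2 * p)%:R *+ 2 :> R.
  by rewrite mulrn_wgt0 // divr_gt0 ?mulr_gt0 ?ltr0n ?muln_gt0 ?pi_gt0.
have -> : JJt_eig p k = 2 - 2 * cos (k%:R * pi / (2 * p)%:R *+ 2).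
  by rewrite /JJt_eig cos_mulr2n cos2sin2 mulr2n; ring.
move: (_ *+ 2) phip phi_gt0 => phi phip phi_gt0.
have phi_lt : phi < pi.
  have kp' : k%:R + 1 <= p%:R :> R by rewrite natr1 ler_nat.
  have := @pi_gt0 R; have : 0 < p%:R :> R by rewrite ltr0n.
  nra.
apply/eigenvalueP; exists (\row_(i < p.-1) sin (i.+1%:R * phi)).
  rewrite (@row_mulJJtr _ _ (fun j => sin (j%:R * phi))) ?mul0r ?sin0 //; last first.
    by rewrite phip sin_natmulpi.
  apply/rowP => i; rewrite !mxE -[i%:R * phi](addrK phi) -mulr_natSl (mulr_natSl phi i.+1).
  by move: (i.+1%:R * phi) => a; rewrite sinB sinD mulr2n; ring.
have p1 : (0 < p.-1)%N by lia.
apply/eqP => /rowP/(_ (Ordinal p1)); rewrite !mxE mul1r; apply/eqP/lt0r_neq0.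
by apply: sin_gt0_pi; rewrite phi_gt0 phi_lt.
Qed.

Lemma eigenvalue_JJtP p a : (1 < p)%N ->
  eigenvalue (Jmx R p *m (Jmx R p)^T) a -> exists2 k, (0 < k < p)%N & a = JJt_eig p k.
Proof.
move=> p1 pa; have memE k : (k \in iota 1 p.-1) = (0 < k < p)%N.
  by rewrite mem_iota add1n prednK // ltnW.
have : a \in [seq JJt_eig p k | k <- iota 1 p.-1].
  move: pa; apply: eigenvalue_mem.
  - rewrite map_inj_in_uniq ?iota_uniq // => k l; rewrite !memE => /andP[_ kp] /andP[_ lp].
    case: (ltngtP k l) => // [kl|lk] /eqP.
      by rewrite (lt_eqF (JJt_eig_lt kl (ltnW lp))).
    by rewrite (gt_eqF (JJt_eig_lt lk (ltnW kp))).
  - by rewrite size_map size_iota.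
  - by apply/allP => _ /mapP[k kp ->]; rewrite memE in kp; apply: eigenvalue_JJt.
by case/mapP => k; rewrite memE; exists k.
Qed.

Lemma eigenvalue_gram_JtensP p d (c : R) a : (1 < p)%N -> (0 < d)%N -> c != 0 ->
  let H := c *: (Jmx R p *t (1%:M : 'M_d)) in
  eigenvalue (H *m H^T) a <-> exists2 k, (0 < k < p)%N & a = c ^+ 2 * JJt_eig p k.
Proof.
move=> p1 d0 c0 H; have pp0 : (0 < p.-1)%N by lia.
have c2_neq0 : c ^+ 2 != 0 by rewrite expf_neq0.
have -> : H *m H^T = c ^+ 2 *: ((Jmx R p *m (Jmx R p)^T) *t (1%:M : 'M_d)).
  rewrite /H linearZ /= trmx_tens trmx1 -scalemxAr scalemxAl scalerA -scalemxAl.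
  by rewrite tensmx_mul mulmx1 expr2.
rewrite -[X in eigenvalue _ X](divfK c2_neq0) mulrC eigenvalueZ //.
rewrite eigenvalue_tensmx1 //; split.
  by case/eigenvalue_JJtP => // k kp akE; exists k; rewrite // -akE mulrC divfK.
by case=> k kp ->; rewrite mulrAC divff ?mul1r //; apply: eigenvalue_JJt.
Qed.

Lemma kappa_Jtens p d (c : R) : (1 < p)%N -> (0 < d)%N -> c != 0 ->
  kappa (c *: (Jmx R p *t (1%:M : 'M_d))) =
  sin ((p.-1)%:R * pi / (2 * p)%:R) / sin (pi / (2 * p)%:R).
Proof.
move=> p1 d0 c0; have spectrum := eigenvalue_gram_JtensP _ p1 d0 c0.
have c2_gt0 : 0 < c ^+ 2 by rewrite exprn_even_gt0.
rewrite /kappa (@lambda_maxE _ _ _ (c ^+ 2 * JJt_eig p p.-1)); first last.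
- by move=> _ /spectrum[k kp ->]; rewrite ler_pM2l // JJt_eig_le //; lia.
- by apply/spectrum; exists p.-1 => //; lia.
rewrite (@lambda_min_posE _ _ _ (c ^+ 2 * JJt_eig p 1)); first last.
- by move=> _ /spectrum[k kp ->] _; rewrite ler_pM2l // JJt_eig_le //; lia.
- by rewrite mulr_gt0 // JJt_eig_gt0 // ltnW.
- by apply/spectrum; exists 1%N.
by rewrite invfM mulrACA divff ?mul1r ?lt0r_neq0 // sqrt_JJt_eig_ratio.
Qed.

End DifferenceSpectrum.

Theorem lemma3 (R : realType) (Lf : R) (m1 m2 d : nat) :
  0 < Lf -> (2 <= m1)%N -> (1 <= m2)%N -> ~~ odd (m1 * m2) ->
  (5 <= d)%N -> odd d ->
  let m := (3 * m1 * m2)%N in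
  let AA := col_mx (Abarmx Lf m1 m2 d) (Amx Lf m1 m2 d) in
  (m%:R / 4 : R) <= kappa AA /\
  kappa AA = kappa (Hmx Lf m1 m2 d) /\
  kappa (Hmx Lf m1 m2 d) =
    sin (((3 * m1 * m2)%N.-1)%:R * (pi : R) / (6 * m1 * m2)%N%:R)
      / sin ((pi : R) / (6 * m1 * m2)%N%:R) /\
  sin (((3 * m1 * m2)%N.-1)%:R * (pi : R) / (6 * m1 * m2)%N%:R)
      / sin ((pi : R) / (6 * m1 * m2)%N%:R) < (m%:R : R).
Proof.
move=> Lf_gt0 m1_ge2 m2_ge1 m1m2_even d_ge5 _ m AA.
have m_gt1 : (1 < 3 * m1 * m2)%N by nia.
have m_even : ~~ odd (3 * m1 * m2) by rewrite -mulnA oddM negb_and m1m2_even orbT.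
have c_neq0 : (mm m1 m2)%:R * Lf != 0.
  by rewrite mulf_neq0 ?(lt0r_neq0 Lf_gt0) // pnatr_eq0 -lt0n /mm; nia.
have kappaH : kappa (Hmx Lf m1 m2 d) =
    sin (((3 * m1 * m2)%N.-1)%:R * pi / (2 * (3 * m1 * m2))%:R)
      / sin (pi / (2 * (3 * m1 * m2))%:R).
  by apply: kappa_Jtens => //; lia.
have kappaAA : kappa AA = kappa (Hmx Lf m1 m2 d).
  by rewrite /AA /Abarmx /Amx col_mx_rows_ofC kappa_rowsub //; apply: rows_ofC_idx_bij.
have -> : (6 * m1 * m2 = 2 * (3 * m1 * m2))%N by rewrite !mulnA.
rewrite kappaAA kappaH sin_pred_pi_div; last by lia.
split; last by split=> //; split=> //; apply: cot_pi_div_lt; lia.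
apply: le_trans (cot_pi_div_ge _ _ m_even); last by lia.
by rewrite ler_pM2l ?ltr0n /m; [lra | lia].
Qed.
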